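(* Let $d>k\geq1$ be integers, let $\beta>0$ and $\lambda_k>2\sqrt{\beta}$, and let $A:=\mathrm{diag}(\lambda_k,\dots,\lambda_k,2\sqrt\beta,\dots,2\sqrt\beta)\in\mathbb{R}^{d\times d}$, with $\lambda_k$ repeated $k$ times and $2\sqrt\beta$ repeated $d-k$ times. Let $U_k\in\mathbb{R}^{d\times k}$ be the matrix of the first $k$ standard basis vectors and $U_{-k}\in\mathbb{R}^{d\times(d-k)}$ that of the last $d-k$ standard basis vectors. Let $\varepsilon\in(0,1)$. Then there exist $X_0\in\mathrm{St}(d,k)$ with $\cos\theta_k(U_k,X_0)>0$ and perturbations $(\Xi_t)_{t\geq0}\subset\mathbb{R}^{d\times k}$ satisfying, for all $t\geq0$, $U_{-k}^\top\Xi_t=0$ and $\|U_k^\top\Xi_t\|_2\leq(\lambda_k-2\sqrt\beta)\cos\theta_k(U_k,X_t)$, such that the ANPM iterates $(X_t)_{t\geq0}$ on $A$ with momentum $\beta$ and these perturbations satisfy $\tan\theta_k(U_k,X_t)>\varepsilon$ for all $t\geq0$.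
   Context: $\mathrm{St}(d,k):=\{X\in\mathbb{R}^{d\times k}:X^\top X=I_k\}$. For $Y\in\mathbb{R}^{d\times k}$, $\mathrm{QR}(Y)$ is the pair $(X,R)$ with $Y=XR$, $X\in\mathrm{St}(d,k)$, $R$ upper triangular $k\times k$ with nonnegative diagonal (unique, $R$ invertible, when $Y$ has full column rank). For $U,X\in\mathrm{St}(d,k)$, $\theta_k(U,X):=\arccos\sigma_{\min}(U^\top X)\in[0,\pi/2]$. ANPM with momentum $\beta$ and perturbations $(\Xi_t)$ (which may depend on the iterates): given $X_0\in\mathrm{St}(d,k)$, $(X_1,R_1)=\mathrm{QR}(\tfrac12 AX_0+\Xi_0)$, and for $t\geq1$, $Y_{t+1}=AX_t-\beta X_{t-1}R_t^{-1}+\Xi_t$, $(X_{t+1},R_{t+1})=\mathrm{QR}(Y_{t+1})$. *)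

From HB Require Import structures.
From mathcomp Require Import all_boot all_order all_algebra.
From mathcomp Require Import classical_sets reals trigo.
Set Implicit Arguments. Unset Strict Implicit. Unset Printing Implicit Defensive.
Import Order.TTheory GRing.Theory Num.Theory.
Local Open Scope ring_scope.
Local Open Scope classical_set_scope.

Section ANPMDefs.
Variable R : realType.

Definition vnorm n (v : 'cV[R]_n) : R := Num.sqrt (\sum_i (v i ord0) ^+ 2).

Definition unit_images m n (M : 'M[R]_(m, n)) : set R :=
  [set r | exists v : 'cV[R]_n, vnorm v = 1 /\ r = vnorm (M *m v)].

Definition spec_norm m n (M : 'M[R]_(m, n)) : R := sup (unit_images M).

Definition sigma_min n (M : 'M[R]_n) : R := inf (unit_images M).

Definition stiefel d k (X : 'M[R]_(d, k)) : Prop := X^T *m X = 1%:M.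

Definition theta d k (U X : 'M[R]_(d, k)) : R := acos (sigma_min (U^T *m X)).

(* (X,Rm) = QR(Y): Y = X Rm, X in St, Rm upper triangular, nonneg diagonal;
   Rm invertible (Y of full column rank), which makes the pair unique. *)
Definition is_QR d k (Y X : 'M[R]_(d, k)) (Rm : 'M[R]_k) : Prop :=
  [/\ Y = X *m Rm, stiefel X,
      (forall i j : 'I_k, (j < i)%N -> Rm i j = 0),
      (forall i : 'I_k, 0 <= Rm i i) & Rm \in unitmx].

Definition ANPM d k (A : 'M[R]_d) (beta : R) (Xi : nat -> 'M[R]_(d, k))
    (X : nat -> 'M[R]_(d, k)) (Rs : nat -> 'M[R]_k) : Prop :=
  [/\ stiefel (X 0%N),
      is_QR ((2^-1) *: (A *m X 0%N) + Xi 0%N) (X 1%N) (Rs 1%N) &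
      forall t : nat, (1 <= t)%N ->
        is_QR (A *m X t - beta *: (X t.-1 *m invmx (Rs t)) + Xi t)
              (X t.+1) (Rs t.+1)].

Definition Ufirst d k : 'M[R]_(d, k) := \matrix_(i, j) ((i : nat) == j)%:R.
Definition Ulast d k : 'M[R]_(d, d - k) := \matrix_(i, j) ((i : nat) == k + j)%N%:R.

Definition Adiag d k (lam beta : R) : 'M[R]_d :=
  \matrix_(i, j) (if (i : nat) == j then (if (i < k)%N then lam else 2 * Num.sqrt beta)
                  else 0).

End ANPMDefs.

From HB Require Import structures.
From mathcomp Require Import all_boot all_order all_algebra.
From mathcomp Require Import classical_sets reals trigo.
From mathcomp Require Import ring lra.
Set Implicit Arguments. Unset Strict Implicit. Unset Printing Implicit Defensive.
Import Order.TTheory GRing.Theory Num.Theory.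
Local Open Scope ring_scope.

(* Take X_0 with columns e_1, ..., e_(k-1), c e_k + s e_(k+1), where c = 3/5 and
   s = 4/5.  Then A X_0 agrees with X_0 diag(lam, ..., lam, 2 sqrt beta) except
   in the entry (k, k), where it is off by (lam - 2 sqrt beta) c: exactly the
   size of perturbation allowed, so Xi_t can cancel it.  Starting from such a
   fixed point the momentum term X_(t-1) R_t^-1 stays a diagonal rescaling of
   X_0, hence so does Y_(t+1), and its QR factorisation returns X_0 again with a
   positive diagonal R_(t+1) whose entries follow r' = a - beta / r; these stay
   above a / 2 because 4 beta <= a^2 for a in {lam, 2 sqrt beta}.  So X_t = X_0
   for all t and tan theta_k(U_k, X_t) = s / c = 4 / 3 > eps. *)

Section DiagonalNorms.
Variable R : realType.

Lemma vnorm_eq1 n (v : 'cV[R]_n) : vnorm v = 1 -> \sum_i v i ord0 ^+ 2 = 1.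
Proof.
rewrite /vnorm => v1.
have sum_ge0 : 0 <= \sum_i v i ord0 ^+ 2 by apply: sumr_ge0 => i _; exact: sqr_ge0.
by rewrite -(sqr_sqrtr sum_ge0) v1 expr1n.
Qed.

Lemma vnorm_diag_mx n (e : 'rV[R]_n) (v : 'cV[R]_n) :
  vnorm (diag_mx e *m v) = Num.sqrt (\sum_i e 0 i ^+ 2 * v i ord0 ^+ 2).
Proof.
by rewrite /vnorm mul_diag_mx; congr Num.sqrt; apply: eq_bigr => i _; rewrite mxE exprMn.
Qed.

Lemma vnorm_diag_mx_ge n (e : 'rV[R]_n) (v : 'cV[R]_n) (b : R) :
  0 <= b -> (forall i, b ^+ 2 <= e 0 i ^+ 2) -> vnorm v = 1 ->
  b <= vnorm (diag_mx e *m v).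
Proof.
move=> b_ge0 le_be /vnorm_eq1 v1; rewrite vnorm_diag_mx -(ger0_norm b_ge0) -sqrtr_sqr.
rewrite ler_wsqrtr // -[b ^+ 2]mulr1 -v1 mulr_sumr; apply: ler_sum => i _.
by rewrite ler_wpM2r ?sqr_ge0.
Qed.

Lemma vnorm_diag_mx_le n (e : 'rV[R]_n) (v : 'cV[R]_n) (b : R) :
  0 <= b -> (forall i, e 0 i ^+ 2 <= b ^+ 2) -> vnorm v = 1 ->
  vnorm (diag_mx e *m v) <= b.
Proof.
move=> b_ge0 le_eb /vnorm_eq1 v1; rewrite vnorm_diag_mx -(ger0_norm b_ge0) -sqrtr_sqr.
rewrite ler_wsqrtr // -[b ^+ 2]mulr1 -v1 mulr_sumr; apply: ler_sum => i _.
by rewrite ler_wpM2r ?sqr_ge0.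
Qed.

Lemma vnorm_delta n (i0 : 'I_n) : vnorm (delta_mx i0 0 : 'cV[R]_n) = 1.
Proof.
rewrite /vnorm (bigD1 i0) //= big1 => [|i /negbTE i_neq]; last by rewrite mxE i_neq expr0n.
by rewrite mxE !eqxx expr1n addr0 sqrtr1.
Qed.

Lemma vnorm_diag_mx_delta n (e : 'rV[R]_n) (i0 : 'I_n) :
  vnorm (diag_mx e *m delta_mx i0 0) = `|e 0 i0|.
Proof.
rewrite vnorm_diag_mx (bigD1 i0) //= big1 => [|i /negbTE i_neq]; last first.
  by rewrite mxE i_neq expr0n mulr0.
by rewrite mxE !eqxx expr1n mulr1 addr0 sqrtr_sqr.
Qed.

Lemma sigma_min_diag_mx n (e : 'rV[R]_n) (b : R) (i0 : 'I_n) :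
  0 <= b -> (forall i, b ^+ 2 <= e 0 i ^+ 2) -> e 0 i0 = b ->
  sigma_min (diag_mx e) = b.
Proof.
move=> b_ge0 le_be ei0; rewrite /sigma_min.
have b_in : unit_images (diag_mx e) b.
  by exists (delta_mx i0 0); rewrite vnorm_delta vnorm_diag_mx_delta ei0 ger0_norm.
have b_lb : lbound (unit_images (diag_mx e)) b.
  by move=> r [v [v1 ->]]; exact: vnorm_diag_mx_ge.
apply/eqP; rewrite eq_le; apply/andP; split; first by apply: ge_inf b_in; exists b.
by apply: lb_le_inf => //; exists b.
Qed.

Lemma spec_norm_diag_mx_le n (e : 'rV[R]_n.+1) (b : R) :
  0 <= b -> (forall i, e 0 i ^+ 2 <= b ^+ 2) -> spec_norm (diag_mx e) <= b.
Proof.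
move=> b_ge0 le_eb; apply: ge_sup => [|r [v [v1 ->]]]; last exact: vnorm_diag_mx_le.
by exists (vnorm (diag_mx e *m delta_mx 0 0)), (delta_mx 0 0); rewrite vnorm_delta.
Qed.

End DiagonalNorms.

Section StationaryANPM.
Variable R : realType.

Fixpoint momentum_seq (a beta : R) (n : nat) : R :=
  if n is n'.+1 then a - beta / momentum_seq a beta n' else a / 2.

Lemma momentum_seq_ge (a beta : R) n :
  0 < a -> 4 * beta <= a ^+ 2 -> a / 2 <= momentum_seq a beta n.
Proof.
move=> a_gt0 le_beta_a; elim: n => [|n IH] //=.
have r_gt0 : 0 < momentum_seq a beta n by apply: lt_le_trans IH; lra.
suff : beta / momentum_seq a beta n <= a / 2 by lra.
by rewrite ler_pdivrMr //; nra.
Qed.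

Lemma diag_mx_unit n (e : 'rV[R]_n) : (forall j, e 0 j != 0) -> diag_mx e \in unitmx.
Proof.
by move=> e_neq0; rewrite unitmxE det_diag unitfE; apply/prodf_neq0 => j _.
Qed.

Lemma invmx_diag n (e : 'rV[R]_n) :
  (forall j, e 0 j != 0) -> invmx (diag_mx e) = diag_mx (\row_j (e 0 j)^-1).
Proof.
move=> e_neq0; have e_unit := diag_mx_unit e_neq0.
have eV : diag_mx e *m diag_mx (\row_j (e 0 j)^-1) = 1%:M.
  rewrite mulmx_diag; apply/matrixP => i j; rewrite !mxE.
  by case: eqP => [->|]; rewrite ?mulr0n ?mulr1n ?mulfV.
by rewrite -[RHS](mulKmx e_unit) eV mulmx1.
Qed.

Lemma is_QR_diag d k (X : 'M[R]_(d, k)) (e : 'rV[R]_k) :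
  stiefel X -> (forall j, 0 < e 0 j) -> is_QR (X *m diag_mx e) X (diag_mx e).
Proof.
move=> X_st e_gt0; split=> //.
- by move=> i j lt_ji; rewrite mxE -val_eqE (gtn_eqF lt_ji) mulr0n.
- by move=> i; rewrite mxE eqxx mulr1n ltW.
- by apply: diag_mx_unit => j; exact: lt0r_neq0.
Qed.

Lemma ANPM_stationary d k (A : 'M[R]_d) (beta : R) (X Xi : 'M[R]_(d, k))
    (D : 'rV[R]_k) :
  stiefel X -> A *m X + Xi = X *m diag_mx D ->
  (forall j, 0 < D 0 j) -> (forall j, 4 * beta <= D 0 j ^+ 2) ->
  ANPM A beta (fun t => (if t == 0%N then 2^-1 else 1) *: Xi) (fun=> X)
    (fun t => diag_mx (\row_j momentum_seq (D 0 j) beta t.-1)).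
Proof.
move=> X_st AX_eq D_gt0 le_beta_D.
pose r n : 'rV[R]_k := \row_j momentum_seq (D 0 j) beta n.
have r_gt0 n j : 0 < r n 0 j.
  rewrite mxE; apply: lt_le_trans (momentum_seq_ge _ (D_gt0 j) (le_beta_D j)).
  by have := D_gt0 j; lra.
have QR_r n Y : Y = X *m diag_mx (r n) -> is_QR Y X (diag_mx (r n)).
  by move->; exact: is_QR_diag.
split=> // [|[//|t] _].
  apply: (QR_r 0%N); rewrite -scalerDr AX_eq scalemxAr; congr (_ *m _).
  apply/matrixP => i j; rewrite !mxE /=.
  by case: eqP; rewrite ?mulr0n ?mulr1n ?mulr0 // mulrC.
apply: (QR_r t.+1); rewrite scale1r invmx_diag => [|j]; last exact: lt0r_neq0 (r_gt0 t j).
rewrite addrAC AX_eq scalemxAr -mulmxBr; congr (_ *m _).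
apply/matrixP => i j; rewrite !mxE.
by case: eqP; rewrite ?mulr0n ?mulr1n ?mulr0 ?subr0.
Qed.

End StationaryANPM.

Section CoordinateFrames.
Variable R : realType.

Lemma UfirstT_mulmxE d k (M : 'M[R]_(d, k)) (le_kd : (k <= d)%N) i j :
  ((Ufirst R d k)^T *m M) i j = M (widen_ord le_kd i) j.
Proof.
rewrite !mxE (bigD1 (widen_ord le_kd i)) //= big1 => [|l l_neq].
  by rewrite !mxE eqxx mul1r addr0.
rewrite !mxE; case: eqP => [l_eq|]; last by rewrite mul0r.
by case/negP: l_neq; apply/eqP/val_inj.
Qed.

Lemma Adiag_diag_mx d k (lam beta : R) :
  Adiag d k lam beta = diag_mx (\row_i if (i < k)%N then lam else 2 * Num.sqrt beta).
Proof.
apply/matrixP => i j; rewrite !mxE -val_eqE.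
by case: eqP => [/val_inj ->|]; rewrite ?mulr1n ?mulr0n.
Qed.

Lemma ord_max_ge n (j : 'I_n.+1) : (n <= j)%N -> j = ord_max.
Proof. by move=> le_nj; apply/val_inj/eqP; rewrite eqn_leq le_nj -ltnS ltn_ord. Qed.

Lemma sum_nat_delta n (a : nat) (F : nat -> R) :
  \sum_(l < n) ((l : nat) == a)%:R * F l = if (a < n)%N then F a else 0.
Proof.
transitivity (\sum_(l < n | (l : nat) == a) F l); last exact: big_ord1_eq.
rewrite [RHS]big_mkcond /=; apply: eq_bigr => l _.
by case: eqP; rewrite ?mul1r ?mul0r.
Qed.

End CoordinateFrames.

(* Indices are 0-based here: the frame has k.+1 columns, and its last column,
   of index k, is the tilted one. *)
Section TiltedFrame.
Variables (R : realType) (d k : nat) (c s : R).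
Hypothesis lt_kd : (k.+1 < d)%N.

Definition tilted_entry (l : nat) (j : 'I_k.+1) : R :=
  if (j < k)%N then (l == j)%:R else c * (l == k)%:R + s * (l == k.+1)%:R.

Definition tilted_frame : 'M[R]_(d, k.+1) := \matrix_(l, j) tilted_entry l j.

Lemma sum_tilted_entry (F : nat -> R) (j : 'I_k.+1) :
  \sum_(l < d) tilted_entry l j * F l = if (j < k)%N then F j else c * F k + s * F k.+1.
Proof.
rewrite /tilted_entry; case: ifP => lt_jk.
  by rewrite sum_nat_delta (ltn_trans lt_jk (ltnW lt_kd)).
under eq_bigr do rewrite mulrDl -!mulrA.
by rewrite big_split -!mulr_sumr !sum_nat_delta (ltnW lt_kd) lt_kd.
Qed.

Lemma tilted_frame_stiefel : c ^+ 2 + s ^+ 2 = 1 -> stiefel tilted_frame.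
Proof.
move=> cs1; apply/matrixP => i j; rewrite mxE.
under eq_bigr do rewrite !mxE.
rewrite (sum_tilted_entry (tilted_entry^~ j)) /tilted_entry !mxE -val_eqE /=.
have lt_kSk := ltnSn k.
have [lt_ik|/ord_max_ge->] := ltnP i k; have [lt_jk|/ord_max_ge->] := ltnP j k => //=.
- by rewrite (ltn_eqF lt_ik) (ltn_eqF (ltn_trans lt_ik lt_kSk)) !mulr0 addr0.
- by rewrite (gtn_eqF lt_jk) (gtn_eqF (ltn_trans lt_jk lt_kSk)) !mulr0 addr0.
- by rewrite !eqxx (gtn_eqF lt_kSk) (ltn_eqF lt_kSk) !mulr0 !mulr1 addr0 add0r -!expr2.
Qed.

Lemma UfirstT_tilted_frame :
  (Ufirst R d k.+1)^T *m tilted_frame = diag_mx (\row_j if (j < k)%N then 1 else c).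
Proof.
apply/matrixP => i j; rewrite (UfirstT_mulmxE _ (ltnW lt_kd)) !mxE /tilted_entry /=.
have [lt_jk|le_kj] := ltnP j k; first by rewrite -val_eqE; case: eqP => [->|]; rewrite ?lt_jk.
rewrite (ord_max_ge le_kj) (ltn_eqF (ltn_ord i)) -val_eqE /=.
by case: eqP => [->|_]; rewrite ?ltnn ?mulr1 ?mulr0 ?addr0.
Qed.

Lemma theta_tilted_frame :
  0 <= c <= 1 -> theta (Ufirst R d k.+1) tilted_frame = acos c.
Proof.
case/andP=> c_ge0 c_le1; rewrite /theta UfirstT_tilted_frame.
rewrite (@sigma_min_diag_mx _ _ _ c ord_max) // => [i|]; last by rewrite mxE ltnn.
by rewrite mxE; case: ifP => _; rewrite ?expr1n; nra.
Qed.

Lemma cos_theta_tilted_frame :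
  0 <= c <= 1 -> cos (theta (Ufirst R d k.+1) tilted_frame) = c.
Proof.
move=> c01; rewrite theta_tilted_frame // acosK // in_itv /=.
by case/andP: c01 => c_ge0 ->; rewrite andbT (le_trans _ c_ge0) ?lerN10.
Qed.

Lemma tan_theta_tilted_frame :
  0 < c -> 0 <= s -> c ^+ 2 + s ^+ 2 = 1 ->
  tan (theta (Ufirst R d k.+1) tilted_frame) = s / c.
Proof.
move=> c_gt0 s_ge0 cs1; have c01 : 0 <= c <= 1 by apply/andP; split; nra.
rewrite /tan cos_theta_tilted_frame // theta_tilted_frame // sin_acos; last first.
  by apply/andP; split; nra.
by rewrite (_ : 1 - c ^+ 2 = s ^+ 2) ?sqrtr_sqr ?ger0_norm //; lra.
Qed.

Definition corner : 'M[R]_(d, k.+1) :=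
  \matrix_(l, j) (((l : nat) == k) && ((j : nat) == k))%:R.

Lemma UlastT_corner : (Ulast R d k.+1)^T *m corner = 0.
Proof.
apply/matrixP => i j; rewrite !mxE big1 // => l _; rewrite !mxE.
by case: eqP => [->|_]; rewrite ?(gtn_eqF (leq_addr _ _)) /= ?mulr0 ?mul0r.
Qed.

Lemma UfirstT_scale_corner (a : R) :
  (Ufirst R d k.+1)^T *m (a *: corner) = diag_mx (\row_j (a * ((j : nat) == k)%:R)).
Proof.
apply/matrixP => i j; rewrite (UfirstT_mulmxE _ (ltnW lt_kd)) !mxE /=.
have [<-|ij] := eqVneq i j; first by rewrite andbb mulr1n.
rewrite mulr0n; case: eqP => [ik|]; last by rewrite mulr0.
by case: eqP => [jk|]; rewrite ?mulr0 //; case/eqP: ij; apply/val_inj; rewrite /= ik jk.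
Qed.

Lemma spec_norm_UfirstT_scale_corner (a : R) :
  spec_norm ((Ufirst R d k.+1)^T *m (a *: corner)) <= `|a|.
Proof.
rewrite UfirstT_scale_corner; apply: spec_norm_diag_mx_le => // i.
by rewrite mxE real_normK ?num_real //; case: eqP => _; rewrite ?mulr1 ?mulr0 ?expr0n ?sqr_ge0.
Qed.

Lemma Adiag_tilted_frame (lam beta : R) :
  Adiag d k.+1 lam beta *m tilted_frame + ((2 * Num.sqrt beta - lam) * c) *: corner
  = tilted_frame *m diag_mx (\row_j if (j < k)%N then lam else 2 * Num.sqrt beta).
Proof.
rewrite Adiag_diag_mx mul_diag_mx mul_mx_diag.
apply/matrixP => l j; rewrite !mxE /tilted_entry.
have [lt_jk|/ord_max_ge->] := ltnP j k.
  rewrite (ltn_eqF lt_jk) andbF mulr0 addr0.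
  by case: eqP => [->|]; rewrite ?mulr0 ?mul0r // (ltn_trans lt_jk) // mulrC.
rewrite /= eqxx andbT.
have [->|lk] := eqVneq (l : nat) k.
  by rewrite ltnSn (ltn_eqF (ltnSn k)) /=; ring.
rewrite !mulr0 addr0 !add0r.
by case: eqP => [->|]; rewrite ?ltnn ?mulr0 ?mul0r // [LHS]mulrC.
Qed.

End TiltedFrame.

Theorem theorem4 (R : realType) (d k : nat) (beta lam eps : R) :
  (1 <= k)%N -> (k < d)%N -> 0 < beta -> 2 * Num.sqrt beta < lam ->
  0 < eps < 1 ->
  exists (X : nat -> 'M[R]_(d, k)) (Rs : nat -> 'M[R]_k) (Xi : nat -> 'M[R]_(d, k)),
    [/\ stiefel (X 0%N),
        0 < cos (theta (Ufirst R d k) (X 0%N)),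
        ANPM (Adiag d k lam beta) beta Xi X Rs,
        (forall t : nat,
           (Ulast R d k)^T *m Xi t = 0 /\
           spec_norm ((Ufirst R d k)^T *m Xi t)
             <= (lam - 2 * Num.sqrt beta) * cos (theta (Ufirst R d k) (X t))) &
        (forall t : nat,
           cos (theta (Ufirst R d k) (X t)) = 0 \/
           eps < tan (theta (Ufirst R d k) (X t)))].
Proof.
case: k => [//|k] _ lt_kd beta_gt0 gap_gt0 /andP[eps_gt0 eps_lt1].
pose c : R := 3 / 5; pose s : R := 4 / 5.
have cs1 : c ^+ 2 + s ^+ 2 = 1 by rewrite /c /s; field.
pose X := tilted_frame d k c s.
pose Xi := ((2 * Num.sqrt beta - lam) * c) *: corner R d k.
pose D : 'rV[R]_k.+1 := \row_j if (j < k)%N then lam else 2 * Num.sqrt beta.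
have cos_X : cos (theta (Ufirst R d k.+1) X) = c.
  by apply: cos_theta_tilted_frame => //; apply/andP; rewrite /c; split; lra.
have sqrt_beta_gt0 : 0 < Num.sqrt beta by rewrite sqrtr_gt0.
have four_beta : 4 * beta = (2 * Num.sqrt beta) ^+ 2 by rewrite exprMn sqr_sqrtr ?ltW //; ring.
exists (fun=> X), (fun t => diag_mx (\row_j momentum_seq (D 0 j) beta t.-1)),
  (fun t => (if t == 0%N then 2^-1 else 1) *: Xi); split.
- exact: tilted_frame_stiefel.
- by rewrite cos_X /c; lra.
- apply: ANPM_stationary => [||j|j].
  + exact: tilted_frame_stiefel.
  + exact: Adiag_tilted_frame.
  + by rewrite mxE; case: ifP => _; lra.
  + by rewrite mxE four_beta; case: ifP => _; rewrite ?lexx //; nra.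
- move=> t; rewrite cos_X; split.
    by rewrite /Xi -!scalemxAr UlastT_corner !scaler0.
  have x_le0 : (2 * Num.sqrt beta - lam) * c <= 0 by rewrite /c; lra.
  rewrite /Xi scalerA; apply: le_trans (spec_norm_UfirstT_scale_corner lt_kd _) _.
  by rewrite normrM (ler0_norm x_le0); case: (t == 0%N); rewrite ?normr1 ?ger0_norm; lra.
- by move=> t; right; rewrite tan_theta_tilted_frame /c /s //; lra.
Qed.
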